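(* Let $I=\begin{pmatrix}1&0\\0&1\end{pmatrix}$, $X=\begin{pmatrix}0&1\\1&0\end{pmatrix}$, $Z=\begin{pmatrix}1&0\\0&-1\end{pmatrix}$ and $Y=XZ$. For each $M:=M_1\otimes M_2\otimes M_3$ with $M_i\in\{I,X,Y,Z\}$ (an $8\times 8$ real matrix), the map $\sigma_M:V(G_{E_8})\to V(G_{E_8})$, $v_x\mapsto v_{Mx}$, is a well-defined automorphism of $G_{E_8}$. These automorphisms form a subgroup $L$ of $\mathrm{Aut}(G_{E_8})$ with $L\cong\mathbb{Z}_2^6$.
   Context: The $E_8$ root system $\Psi_{E_8}\subset\mathbb{R}^8$ consists of the 240 vectors $\pm e_i\pm e_j$ for $1\le i<j\le 8$, together with all $x=(x_1,\dots,x_8)$ with $x_i\in\{\pm1\}$ and $\prod_{i=1}^8x_i=1$. The graph $G_{E_8}$ has vertex set $\{v_x : x\in\Psi_{E_8}\}$ where $v_x=v_{-x}$ (so 120 vertices, one per line), and $v_x,v_y$ are adjacent iff $\langle x,y\rangle=0$ (standard inner product). *)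

From mathcomp Require Import all_boot all_order all_algebra all_fingroup all_solvable.
Set Implicit Arguments. Unset Strict Implicit. Unset Printing Implicit Defensive.
Import GRing.Theory Num.Theory.
Local Open Scope ring_scope.

(* Vectors of R^8 with integer coordinates (all roots have coordinates in
   {-1,0,1}), as column vectors so that a matrix M acts by M *m x. *)
Definition vec := 'cV[int]_8.

Definition e (i : 'I_8) : vec := delta_mx i 0.

Definition sgn (b : bool) : int := (-1) ^+ b.

Definition dot (x y : vec) : int := (x^T *m y) 0 0.

Definition is_root (x : vec) : bool :=
  [exists i : 'I_8, exists j : 'I_8, exists s1 : bool, exists s2 : bool,
     (i < j)%N && (x == sgn s1 *: e i + sgn s2 *: e j)]
  || ([forall i : 'I_8, (x i 0 == 1) || (x i 0 == -1)]
      && (\prod_(i < 8) x i 0 == 1)).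

(* A finite list of candidate vectors (all vectors with entries in {-1,0,1}),
   containing every root; psi_seq is the list of roots. *)
Definition cands : seq vec :=
  [seq \col_(i < 8) ((f i : nat)%:Z - 1) | f : {ffun 'I_8 -> 'I_3}].
Definition psi_seq : seq vec := [seq x <- cands | is_root x].

Definition Root := seq_sub psi_seq.

Definition line (x : Root) : {set Root} :=
  [set y : Root | (val y == val x) || (val y == - val x)].

(* Vertices of G_{E8}: lines of roots; v_x = v_{-x}. *)
Definition V := {A : {set Root} | A \in codom line}.

Definition vtx (x : Root) : V := exist _ (line x) (codom_f line x).

(* Adjacency: v_x ~ v_y iff <x,y> = 0 (independent of representatives). *)
Definition adj (u v : V) : bool :=
  [exists x in val u, exists y in val v, dot (val x) (val y) == 0].

Definition Aut_G : {set {perm V}} :=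
  [set s : {perm V} | [forall u, forall w, adj (s u) (s w) == adj u w]].

Definition mI : 'M[int]_2 := 1%:M.
Definition mX : 'M[int]_2 := \matrix_(i < 2, j < 2) (i != j)%:R.
Definition mZ : 'M[int]_2 := \matrix_(i < 2, j < 2) ((i == j)%:R * sgn (i == 1 :> nat)).
Definition mY : 'M[int]_2 := mX *m mZ.

Definition pauli (k : 'I_4) : 'M[int]_2 :=
  match val k with 0 => mI | 1 => mX | 2 => mY | _ => mZ end.

(* binary digit k of i (i = 4 i_2 + 2 i_1 + i_0) *)
Definition bit (k : nat) (i : 'I_8) : 'I_2 := inord ((i %/ 2 ^ k) %% 2).

Definition kron3 (A B C : 'M[int]_2) : 'M[int]_8 :=
  \matrix_(i < 8, j < 8)
     (A (bit 2 i) (bit 2 j) * B (bit 1 i) (bit 1 j) * C (bit 0 i) (bit 0 j)).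

Definition P := ('I_4 * 'I_4 * 'I_4)%type.
Definition Mof (t : P) : 'M[int]_8 := kron3 (pauli t.1.1) (pauli t.1.2) (pauli t.2).

From mathcomp Require Import all_boot all_order all_algebra all_fingroup all_solvable.
From mathcomp Require Import mxabelem mxtens.
Set Implicit Arguments. Unset Strict Implicit. Unset Printing Implicit Defensive.
Import GRing.Theory Num.Theory.
Local Open Scope ring_scope.

(* Every Pauli matrix is X^a Z^b with X^2 = Z^2 = 1 and ZX = -XZ, so the 64
   tensors M = M_1 (x) M_2 (x) M_3 multiply like (Z_2^2)^3 up to a sign, and a
   sign does not move a line. Each M is a signed permutation matrix whose signs
   multiply to 1 (the signs of each factor are repeated an even number of
   times), so M preserves the inner product and the root system, and sigma_M is
   an automorphism. If sigma_M = 1 then M fixes every line of e_i + e_j, which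
   forces M to be scalar, hence every factor to be scalar, i.e. M = I (x) I (x) I. *)

Lemma sgn_addb a b : sgn (a (+) b) = sgn a * sgn b.
Proof. exact: signr_addb. Qed.

Definition signed_perm_mx n (p : 'I_n -> 'I_n) (s : 'I_n -> bool) : 'M[int]_n :=
  \matrix_(i, j) ((j == p i)%:R * sgn (s i)).

Lemma mul_signed_perm_mx n p s (x : 'cV_n) i :
  (signed_perm_mx p s *m x) i 0 = sgn (s i) * x (p i) 0.
Proof.
rewrite mxE (bigD1 (p i)) //= big1 ?addr0 => [|j /negPf nj].
  by rewrite mxE eqxx mul1r.
by rewrite mxE nj !mul0r.
Qed.

Definition tens_map m n (p : 'I_m -> 'I_m) (q : 'I_n -> 'I_n) (k : 'I_(m * n)) :=
  mxtens_index (p (mxtens_unindex k).1, q (mxtens_unindex k).2).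

Definition tens_sign m n (s : 'I_m -> bool) (r : 'I_n -> bool) (k : 'I_(m * n)) :=
  s (mxtens_unindex k).1 (+) r (mxtens_unindex k).2.

Lemma tens_signE m n s r i j :
  @tens_sign m n s r (mxtens_index (i, j)) = s i (+) r j.
Proof. by rewrite /tens_sign mxtens_indexK. Qed.

Lemma tens_map_inj m n p q :
  injective p -> injective q -> injective (@tens_map m n p q).
Proof.
move=> p_inj q_inj k l /(can_inj (@mxtens_indexK m n)) [/p_inj kl1 /q_inj kl2].
by rewrite -[k]mxtens_unindexK -[l]mxtens_unindexK; congr mxtens_index;
  apply/pair_eqP; rewrite /= kl1 kl2 !eqxx.
Qed.

Lemma tens_signed_perm_mx m n p s q r :
  @signed_perm_mx m p s *t @signed_perm_mx n q r
    = signed_perm_mx (tens_map p q) (tens_sign s r).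
Proof.
apply/matrixP => k l.
case: (mxtens_indexP k) => i j; case: (mxtens_indexP l) => i' j'.
rewrite tensmxE !mxE /tens_map tens_signE mxtens_indexK /= sgn_addb.
rewrite (can_eq (@mxtens_indexK m n)) xpair_eqE mulrACA.
by case: eqP; case: eqP; rewrite /= ?mul0r ?mulr0.
Qed.

Lemma big_mxtens_index (R : Type) (idx : R) (op : Monoid.com_law idx) m n
    (F : 'I_(m * n) -> R) :
  \big[op/idx]_k F k = \big[op/idx]_(i < m) \big[op/idx]_(j < n) F (mxtens_index (i, j)).
Proof.
rewrite pair_big (reindex (@mxtens_index m n)) /=; first by apply: eq_bigr => -[].
by exists (@mxtens_unindex m n) => k _; rewrite (mxtens_indexK, mxtens_unindexK).
Qed.

Lemma prod_sgn_tens_even m n s r : ~~ odd m -> ~~ odd n ->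
  \prod_(k < m * n) sgn (@tens_sign m n s r k) = 1.
Proof.
have sgn_even l (F : 'I_l -> bool) e : ~~ odd e -> (\prod_i sgn (F i)) ^+ e = 1.
  move=> e_even; rewrite -[e]odd_double_half (negPf e_even) add0n -muln2 mulnC.
  by rewrite exprM -prodrXl big1 ?expr1n // => i _; rewrite sqrr_sign.
move=> m_even n_even; rewrite big_mxtens_index.
under eq_bigr => i _ do under eq_bigr => j _ do rewrite tens_signE sgn_addb.
under eq_bigr => i _ do rewrite big_split /= prodr_const card_ord.
by rewrite big_split /= prodr_const card_ord prodrXl !sgn_even ?mulr1.
Qed.

Section TensorProduct.

Variable R : comPzRingType.

Lemma tensmxZl m n p q a (A : 'M[R]_(m, n)) (B : 'M[R]_(p, q)) :
  (a *: A) *t B = a *: (A *t B).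
Proof. by apply/matrixP => i j; rewrite !mxE mulrA. Qed.

Lemma tensmxZr m n p q a (A : 'M[R]_(m, n)) (B : 'M[R]_(p, q)) :
  A *t (a *: B) = a *: (A *t B).
Proof. by apply/matrixP => i j; rewrite !mxE mulrCA. Qed.

Lemma tensmx1 m n : (1%:M : 'M[R]_m) *t (1%:M : 'M[R]_n) = 1%:M.
Proof.
apply/matrixP => k l.
case: (mxtens_indexP k) => i j; case: (mxtens_indexP l) => i' j'.
rewrite tensmxE !mxE (can_eq (@mxtens_indexK m n)) xpair_eqE.
by case: (i == i'); case: (j == j'); rewrite ?mulr0n ?mulr1n ?mulr0 ?mul0r ?mulr1.
Qed.

End TensorProduct.

Lemma tensmx_eq_scalar (R : idomainType) m n (A : 'M[R]_m.+1) (B : 'M[R]_n.+1) c :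
  A *t B = c%:M -> c != 0 -> A = (A 0 0)%:M /\ B = (B 0 0)%:M.
Proof.
move=> AB c_neq0.
have AB_E i k j l : A i k * B j l = c *+ ((i == k) && (j == l)).
  move/matrixP: AB => /(_ (mxtens_index (i, j)) (mxtens_index (k, l))).
  by rewrite tensmxE mxE (can_eq (@mxtens_indexK _ _)) xpair_eqE.
have c_E : c = A 0 0 * B 0 0 by rewrite AB_E !eqxx.
have [A00 B00] : A 0 0 != 0 /\ B 0 0 != 0.
  by apply/andP; rewrite -negb_or -mulf_eq0 -c_E.
split; apply/matrixP => i k; rewrite mxE.
  by apply: (mulIf B00); rewrite AB_E eqxx andbT c_E mulrnAl.
by apply: (mulfI A00); rewrite AB_E eqxx c_E mulrnAr.
Qed.

Section WeylRelations.

Variables (R : pzRingType) (x z : R).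
Hypotheses (xx : x * x = 1) (zz : z * z = 1) (zx : z * x = - (x * z)).

Lemma mul_weyl (a b c d : bool) :
  (x ^+ a * z ^+ b) * (x ^+ c * z ^+ d)
    = (-1) ^+ (b && c) * (x ^+ (a (+) c) * z ^+ (b (+) d)).
Proof.
have expD y : y * y = 1 -> forall e f : bool, y ^+ e * y ^+ f = y ^+ (e (+) f).
  by move=> yy [] [] /=; rewrite ?expr0 ?expr1 ?mulr1 ?mul1r.
have zxC : z ^+ b * x ^+ c = (-1) ^+ (b && c) * (x ^+ c * z ^+ b).
  by case: b; case: c; rewrite /= ?expr0 ?expr1 ?mulr1 ?mul1r ?zx ?mulN1r.
rewrite mulrA -[_ * z ^+ b * x ^+ c]mulrA zxC !mulr_sign.
by case: (b && c); rewrite ?mulrN ?mulNr !mulrA expD // -mulrA expD.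
Qed.

End WeylRelations.

Lemma sqr_mX : mX * mX = 1.
Proof.
by apply/matrixP => -[[|[|i]] Hi] // [[|[|j]] Hj] //;
  rewrite !mxE !big_ord_recr !big_ord0 /= !mxE.
Qed.

Lemma sqr_mZ : mZ * mZ = 1.
Proof.
by apply/matrixP => -[[|[|i]] Hi] // [[|[|j]] Hj] //;
  rewrite !mxE !big_ord_recr !big_ord0 /= !mxE.
Qed.

Lemma mul_mZ_mX : mZ * mX = - (mX * mZ).
Proof.
by apply/matrixP => -[[|[|i]] Hi] // [[|[|j]] Hj] //;
  rewrite !mxE !big_ord_recr !big_ord0 /= !mxE.
Qed.

Definition pauli_x (k : 'I_4) : bool := (k == 1 :> nat) || (k == 2 :> nat).
Definition pauli_z (k : 'I_4) : bool := (1 < k)%N.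

Lemma pauliE k : pauli k = mX ^+ pauli_x k * mZ ^+ pauli_z k.
Proof.
by case: k => [[|[|[|[|k]]]] Hk] //; rewrite /pauli /= ?expr0 ?expr1 ?mulr1 ?mul1r.
Qed.

(* The exponents (a, b) of I, X, Y = XZ, Z = X^a Z^b are (0,0), (1,0), (1,1), (0,1). *)
Definition pauli_index (x z : bool) : 'I_4 := inord (if z then 3 - x else x)%N.

Lemma pauli_x_index x z : pauli_x (pauli_index x z) = x.
Proof. by case: x; case: z; rewrite /pauli_x /pauli_index /= inordK. Qed.

Lemma pauli_z_index x z : pauli_z (pauli_index x z) = z.
Proof. by case: x; case: z; rewrite /pauli_z /pauli_index /= inordK. Qed.

Lemma pauli_indexK k : pauli_index (pauli_x k) (pauli_z k) = k.
Proof. by case: k => [[|[|[|[|k]]]] Hk] //; apply: val_inj; rewrite /= inordK. Qed.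

Definition pmul (a b : 'I_4) : 'I_4 :=
  pauli_index (pauli_x a (+) pauli_x b) (pauli_z a (+) pauli_z b).

Lemma pmulC : commutative pmul.
Proof. by move=> a b; rewrite /pmul addbC [pauli_z a (+) _]addbC. Qed.

Lemma pmulxx a : pmul a a = ord0.
Proof. by rewrite /pmul !addbb; apply: val_inj; rewrite /= inordK. Qed.

Lemma pmul0_eq a b : pmul a b = ord0 -> a = b.
Proof.
move=> ab0; rewrite -[a]pauli_indexK -[b]pauli_indexK.
move: (congr1 pauli_x ab0) (congr1 pauli_z ab0).
rewrite /pmul pauli_x_index pauli_z_index /=.
by do 2!case: (pauli_x _); do 2!case: (pauli_z _).
Qed.

Lemma mul_pauli a b :
  pauli a *m pauli b = sgn (pauli_z a && pauli_x b) *: pauli (pmul a b).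
Proof.
rewrite mulmxE !pauliE mul_weyl ?sqr_mX ?sqr_mZ ?mul_mZ_mX //.
by rewrite /pmul pauli_x_index pauli_z_index mulr_sign scaler_sign.
Qed.

Definition pauli_perm k (r : 'I_2) : 'I_2 := if pauli_x k then rev_ord r else r.
Definition pauli_sign k (r : 'I_2) : bool := pauli_z k && (pauli_perm k r == 1 :> nat).

Lemma pauli_perm_inj k : injective (pauli_perm k).
Proof. by rewrite /pauli_perm; case: (pauli_x k); [apply: rev_ord_inj | move=> ? ?]. Qed.

Lemma pauli_signed_perm_mx k : pauli k = signed_perm_mx (pauli_perm k) (pauli_sign k).
Proof.
case: k => [[|[|[|[|k]]]] Hk] //; apply/matrixP => -[[|[|i]] Hi] // [[|[|j]] Hj] //;
  by rewrite /pauli /= !mxE ?big_ord_recr ?big_ord0 /= ?mxE.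
Qed.

Lemma pauli_scalar k : pauli k = (pauli k 0 0)%:M -> k = ord0.
Proof.
case: k => [[|[|[|[|k]]]] Hk] // /matrixP; first by move=> _; apply: val_inj.
- by move=> /(_ 0 ord_max); rewrite !mxE.
- by move=> /(_ 0 ord_max); rewrite /pauli /= !mxE !big_ord_recr !big_ord0 /= !mxE.
- by move=> /(_ ord_max ord_max); rewrite /pauli /= !mxE.
Qed.

Definition ternary (x : vec) : bool := [forall i, x i 0 \in [:: -1; 0; 1]].
Definition supp (x : vec) : {set 'I_8} := [set i | x i 0 != 0].

Lemma sgn_eqN1 (v : int) : v \in [:: -1; 1] -> sgn (v == -1) = v.
Proof. by rewrite !inE => /orP [] /eqP ->. Qed.

Lemma is_root_ternary x :
  is_root x -> ternary x && ((#|supp x| == 2) || (\prod_i x i 0 == 1)).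
Proof.
case/orP => [/existsP [i /existsP [j /existsP [a /existsP [b]]]] | ].
  case/andP => lt_ij /eqP ->; have neq_ij : i != j by rewrite neq_ltn lt_ij.
  have xE k : (sgn a *: e i + sgn b *: e j) k 0 = sgn a *+ (k == i) + sgn b *+ (k == j).
    by rewrite !mxE !andbT !mulr_natr.
  apply/andP; split.
    apply/forallP => k; rewrite xE.
    case: (eqVneq k i) => [-> | _]; first by rewrite (negPf neq_ij) addr0; case: (a).
    by case: (k == j); rewrite add0r //; case: (b).
  apply/orP; left; rewrite (_ : supp _ = [set i; j]) ?cards2 ?neq_ij //.
  apply/setP => k; rewrite !inE xE.
  case: (eqVneq k i) => [-> | _]; first by rewrite (negPf neq_ij) addr0 signr_eq0.
  by case: (k == j); rewrite add0r ?signr_eq0.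
case/andP => /forallP x_pm1 prod1; rewrite prod1 orbT andbT.
by apply/forallP => k; case/orP: (x_pm1 k) => /eqP ->.
Qed.

Lemma ternary_is_root x :
  ternary x -> (#|supp x| == 2) || (\prod_i x i 0 == 1) -> is_root x.
Proof.
move=> /forallP tern /orP [/cards2P [i [j [neq_ij supp_ij]]] | prod1].
  wlog lt_ij : i j neq_ij supp_ij / (i < j)%N.
    move=> H; case: (ltngtP i j) => [| lt_ji | /val_inj eq_ij]; first exact: H.
      by apply: (H j i); rewrite 1?eq_sym // setUC.
    by rewrite eq_ij eqxx in neq_ij.
  have x_pm1 k : k \in [set i; j] -> x k 0 \in [:: -1; 1].
    by rewrite -supp_ij inE; have := tern k; rewrite !inE; case/or3P => /eqP ->.
  apply/orP; left; apply/existsP; exists i; apply/existsP; exists j.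
  apply/existsP; exists (x i 0 == -1); apply/existsP; exists (x j 0 == -1).
  rewrite lt_ij; apply/eqP/matrixP => k l; rewrite (ord1 l) !mxE !andbT !mulr_natr.
  rewrite !sgn_eqN1 ?x_pm1 ?set21 ?set22 //.
  case: (eqVneq k i) => [-> | ki]; first by rewrite (negPf neq_ij) addr0.
  case: (eqVneq k j) => [-> | kj]; first by rewrite add0r.
  have : k \notin supp x by rewrite supp_ij !inE negb_or ki kj.
  by rewrite inE negbK add0r => /eqP.
apply/orP; right; rewrite prod1 andbT; apply/forallP => k.
have : x k 0 != 0 by apply: contraTneq prod1 => xk0; rewrite (bigD1 k) //= xk0 mul0r.
by have := tern k; rewrite !inE; case/or3P => /eqP ->.
Qed.

Lemma is_rootE x :
  is_root x = ternary x && ((#|supp x| == 2) || (\prod_i x i 0 == 1)).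
Proof. by apply/idP/andP => [/is_root_ternary/andP | [] /ternary_is_root]. Qed.

Lemma mem_psi_seq x : (x \in psi_seq) = is_root x.
Proof.
rewrite mem_filter andb_idr // is_rootE => /andP [/forallP tern _].
apply/mapP; exists [ffun i => inord (absz (x i 0 + 1))]; first by rewrite mem_enum.
apply/matrixP => i j; rewrite (ord1 j) mxE ffunE.
by have := tern i; rewrite !inE => /or3P [] /eqP ->; rewrite inordK.
Qed.

Lemma is_root_pair (i j : 'I_8) : i != j -> is_root (e i + e j).
Proof.
wlog lt_ij : i j / (i < j)%N.
  move=> H neq_ij; case: (ltngtP i j) => [lt_ij | lt_ji | /val_inj eq_ij].
  - exact: H.
  - by rewrite addrC H // eq_sym.
  - by rewrite eq_ij eqxx in neq_ij.
move=> _; apply/orP; left; apply/existsP; exists i; apply/existsP; exists j.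
by apply/existsP; exists false; apply/existsP; exists false; rewrite lt_ij !scale1r eqxx.
Qed.

Lemma dotE x y : dot x y = \sum_i x i 0 * y i 0.
Proof. by rewrite /dot mxE; apply: eq_bigr => i _; rewrite mxE. Qed.

Lemma dotNl x y : dot (- x) y = - dot x y.
Proof. by rewrite !dotE -sumrN; apply: eq_bigr => i _; rewrite mxE mulNr. Qed.

Lemma dotNr x y : dot x (- y) = - dot x y.
Proof. by rewrite !dotE -sumrN; apply: eq_bigr => i _; rewrite mxE mulrN. Qed.

Section SignedPermutationOnRoots.

Variables (p : 'I_8 -> 'I_8) (s : 'I_8 -> bool).
Hypothesis p_inj : injective p.

Lemma dot_signed_perm_mx x y :
  dot (signed_perm_mx p s *m x) (signed_perm_mx p s *m y) = dot x y.
Proof.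
rewrite !dotE [RHS](reindex_inj p_inj); apply: eq_bigr => i _.
by rewrite !mul_signed_perm_mx mulrACA -expr2 sqrr_sign mul1r.
Qed.

Lemma is_root_signed_perm_mx x :
  \prod_i sgn (s i) = 1 -> is_root x -> is_root (signed_perm_mx p s *m x).
Proof.
move=> prod_s; rewrite !is_rootE => /andP [/forallP tern supp_x].
apply/andP; split.
  apply/forallP => i; rewrite mul_signed_perm_mx.
  by have := tern (p i); rewrite !inE; case/or3P => /eqP ->; case: (s i).
have -> : supp (signed_perm_mx p s *m x) = p @^-1: supp x.
  by apply/setP => i; rewrite !inE mul_signed_perm_mx mulf_eq0 signr_eq0.
rewrite card_preimset //.
under eq_bigr => i _ do rewrite mul_signed_perm_mx.
rewrite big_split /= prod_s mul1r.
by rewrite [\prod_i x i 0](reindex_inj p_inj) in supp_x.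
Qed.

End SignedPermutationOnRoots.

Lemma signed_perm_mx_fixing_pairs_scalar p s :
  (forall i j : 'I_8, i != j ->
     exists b, signed_perm_mx p s *m (e i + e j) = sgn b *: (e i + e j)) ->
  signed_perm_mx p s = (sgn (s 0))%:M.
Proof.
move=> fix_pairs.
have fixE i j : i != j -> exists b, forall k,
    sgn (s k) * ((p k == i)%:R + (p k == j)%:R) = sgn b * ((k == i)%:R + (k == j)%:R).
  move=> /fix_pairs [b /matrixP Mij]; exists b => k.
  by have := Mij k 0; rewrite mul_signed_perm_mx !mxE !andbT.
have p_id k : p k = k.
  (* Otherwise e (p k) + e j, for any j outside {k, p k}, leaves its line at k. *)
  apply/eqP/negPn/negP => pk_neq_k.
  have /subsetPn [j _] : ~~ ([set: 'I_8] \subset [set k; p k]).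
    by apply/negP => /subset_leq_card; rewrite cardsT card_ord cards2; case: (_ != _).
  rewrite !inE negb_or => /andP [jk jpk].
  have pk_neq_j : p k != j by rewrite eq_sym.
  have [b /(_ k)] := fixE (p k) j pk_neq_j.
  rewrite eqxx (negPf pk_neq_j) eq_sym (negPf pk_neq_k) eq_sym (negPf jk).
  by rewrite addr0 mulr1 mulr0 => /eqP; rewrite signr_eq0.
have s_const k : s k = s 0.
  have [-> // | k_neq0] := eqVneq k 0.
  have [b sE] := fixE k 0 k_neq0.
  have := sE k; have := sE 0; rewrite !p_id !eqxx (negPf k_neq0) eq_sym (negPf k_neq0).
  by rewrite add0r addr0 !mulr1 => /signr_inj -> /signr_inj ->.
apply/matrixP => i j; rewrite !mxE p_id s_const mulr_natl.
by rewrite eq_sym.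
Qed.

Lemma val_bit k (i : 'I_8) : (bit k i : nat) = ((i %/ 2 ^ k) %% 2)%N.
Proof. by rewrite /bit inordK // ltn_pmod. Qed.

Lemma kron3_tens (A B C : 'M[int]_2) : kron3 A B C = (A *t B) *t C.
Proof.
apply/matrixP => i j; rewrite !mxE /=.
by congr (_ * _ * _); congr (_ _ _); apply: val_inj;
  rewrite /= val_bit ?expn0 ?expn1 ?divn1 // -divnMA modn_small // ltn_divLR.
Qed.

Definition Mof_perm (t : P) : 'I_8 -> 'I_8 :=
  tens_map (tens_map (pauli_perm t.1.1) (pauli_perm t.1.2)) (pauli_perm t.2).

Definition Mof_sign (t : P) : 'I_8 -> bool :=
  tens_sign (tens_sign (pauli_sign t.1.1) (pauli_sign t.1.2)) (pauli_sign t.2).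

Lemma Mof_signed_perm_mx t : Mof t = signed_perm_mx (Mof_perm t) (Mof_sign t).
Proof. by rewrite /Mof kron3_tens !pauli_signed_perm_mx !tens_signed_perm_mx. Qed.

Lemma Mof_perm_inj t : injective (Mof_perm t).
Proof.
exact: tens_map_inj (tens_map_inj (@pauli_perm_inj _) (@pauli_perm_inj _))
  (@pauli_perm_inj _).
Qed.

Lemma is_root_Mof t : {homo mulmx (Mof t) : x / is_root x}.
Proof.
move=> x x_root; rewrite Mof_signed_perm_mx.
apply: is_root_signed_perm_mx x_root; first exact: Mof_perm_inj.
exact: (@prod_sgn_tens_even 4 2 _ _ isT isT).
Qed.

Lemma dot_Mof t x y : dot (Mof t *m x) (Mof t *m y) = dot x y.
Proof. by rewrite Mof_signed_perm_mx (dot_signed_perm_mx _ (@Mof_perm_inj t)). Qed.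

Definition Pmul (t u : P) : P := (pmul t.1.1 u.1.1, pmul t.1.2 u.1.2, pmul t.2 u.2).
Definition P1 : P := (ord0, ord0, ord0).

Lemma PmulC : commutative Pmul.
Proof. by move=> t u; rewrite /Pmul !(pmulC t.1.1, pmulC t.1.2, pmulC t.2). Qed.

Lemma Pmulxx t : Pmul t t = P1.
Proof. by rewrite /Pmul !pmulxx. Qed.

Lemma Pmul1_eq t u : Pmul t u = P1 -> t = u.
Proof.
case: t u => [[a b] c] [[a' b'] c'] [/pmul0_eq -> /pmul0_eq -> /pmul0_eq ->] //.
Qed.

Lemma mul_kron3 (A B C A' B' C' : 'M[int]_2) :
  kron3 A B C *m kron3 A' B' C' = kron3 (A *m A') (B *m B') (C *m C').
Proof. by rewrite !kron3_tens -!tensmx_mul. Qed.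

Lemma mul_Mof t u : exists b, Mof t *m Mof u = sgn b *: Mof (Pmul t u).
Proof.
rewrite /Mof mul_kron3 !mul_pauli !kron3_tens !(tensmxZl, tensmxZr) !scalerA.
by rewrite -!sgn_addb; eexists.
Qed.

Lemma Mof_P1 : Mof P1 = 1%:M.
Proof. by rewrite /Mof kron3_tens /pauli /= /mI !tensmx1. Qed.

Lemma Mof_scalar t c : Mof t = c%:M -> c != 0 -> t = P1.
Proof.
rewrite /Mof kron3_tens => ABC c_neq0.
have [AB C] := @tensmx_eq_scalar _ 3 1 _ _ c ABC c_neq0.
have AB00 : (pauli t.1.1 *t pauli t.1.2) 0 0 != 0.
  apply: contraNneq c_neq0 => AB0; move/matrixP: ABC => /(_ 0 0).
  by rewrite AB AB0 !mxE mul0rn mul0r eqxx mulr1n => <-.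
have [A B] := @tensmx_eq_scalar _ 1 1 _ _ _ AB AB00.
case: t {ABC AB AB00} A B C => [[a b] c'] /=.
by move=> /pauli_scalar -> /pauli_scalar -> /pauli_scalar ->.
Qed.

Lemma vtx_eq x y : (vtx x == vtx y) = (val y == val x) || (val y == - val x).
Proof.
apply/eqP/idP => [/(congr1 val) /= line_xy | yx].
  have : y \in line y by rewrite inE eqxx.
  by rewrite -line_xy inE.
apply: val_inj => /=; apply/setP => z; rewrite !inE.
by case/orP: yx => /eqP ->; rewrite ?opprK // orbC.
Qed.

Lemma adj_vtx x y : adj (vtx x) (vtx y) = (dot (val x) (val y) == 0).
Proof.
apply/existsP/idP => [[x' /andP [/= x'x /existsP [y' /andP [/= y'y]]]] | xy0].
  rewrite inE in x'x; rewrite inE in y'y.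
  by case/orP: x'x => /eqP ->; case/orP: y'y => /eqP ->;
    rewrite ?dotNl ?dotNr ?opprK ?oppr_eq0.
by exists x; rewrite /= inE eqxx; apply/existsP; exists y; rewrite inE eqxx.
Qed.

Definition rep (v : V) : Root := iinv (valP v).

Lemma repK v : vtx (rep v) = v.
Proof. by apply: val_inj; rewrite /= f_iinv. Qed.

(* Junk value x when M *m val x is not a root; only used for root-preserving M. *)
Definition root_act (M : 'M[int]_8) (x : Root) : Root := insubd x (M *m val x).

Lemma val_root_act M x :
  {homo mulmx M : y / is_root y} -> val (root_act M x) = M *m val x.
Proof.
move=> M_root; rewrite insubdK // mem_psi_seq; apply: M_root.
by rewrite -mem_psi_seq; exact: valP.
Qed.

Definition vx_act (M : 'M[int]_8) (v : V) : V := vtx (root_act M (rep v)).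

Lemma vx_act_vtx M x :
  {homo mulmx M : y / is_root y} -> vx_act M (vtx x) = vtx (root_act M x).
Proof.
move=> M_root; apply/eqP; rewrite vtx_eq !val_root_act //.
have /eqP := repK (vtx x); rewrite vtx_eq.
by case/orP => /eqP ->; rewrite ?mulmxN eqxx ?orbT.
Qed.

Lemma vx_act_comp M N K b :
    {homo mulmx M : y / is_root y} -> {homo mulmx N : y / is_root y} ->
    {homo mulmx K : y / is_root y} -> N *m M = sgn b *: K ->
  forall v, vx_act N (vx_act M v) = vx_act K v.
Proof.
move=> M_root N_root K_root NM v; rewrite -(repK v) !vx_act_vtx //; apply/eqP.
rewrite vtx_eq !val_root_act // mulmxA NM -scalemxAl.
by case: b {NM}; rewrite ?scale1r ?scaleN1r ?opprK; apply/orP; [right | left].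
Qed.

Lemma vx_act1 v : vx_act 1%:M v = v.
Proof.
have root1 : {homo mulmx 1%:M : y / is_root y} by move=> y; rewrite mul1mx.
rewrite -(repK v) vx_act_vtx //; apply/eqP.
by rewrite vtx_eq val_root_act // mul1mx eqxx.
Qed.

Lemma adj_vx_act M :
    {homo mulmx M : y / is_root y} -> (forall x y, dot (M *m x) (M *m y) = dot x y) ->
  forall u w, adj (vx_act M u) (vx_act M w) = adj u w.
Proof.
move=> M_root M_dot u w.
rewrite -[u]repK -[w]repK !(vx_act_vtx _ M_root).
by rewrite !adj_vtx !val_root_act // M_dot.
Qed.

Lemma vx_act_MofK t : involutive (vx_act (Mof t)).
Proof.
have [b tt] := mul_Mof t t.
move=> v; rewrite (vx_act_comp (is_root_Mof t) (is_root_Mof t) (is_root_Mof _) tt).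
by rewrite Pmulxx Mof_P1 vx_act1.
Qed.

Definition sigma t : {perm V} := perm (inv_inj (@vx_act_MofK t)).

Lemma sigmaE t v : sigma t v = vx_act (Mof t) v.
Proof. by rewrite permE. Qed.

Lemma sigma_aut t : sigma t \in Aut_G.
Proof.
rewrite inE; apply/forallP => u; apply/forallP => w.
by rewrite !sigmaE adj_vx_act //; [exact: is_root_Mof | exact: dot_Mof].
Qed.

Lemma sigmaM t u : (sigma t * sigma u)%g = sigma (Pmul t u).
Proof.
apply/permP => v; rewrite permM !sigmaE PmulC.
have [b ut] := mul_Mof u t.
by rewrite (vx_act_comp (is_root_Mof t) (is_root_Mof u) (is_root_Mof _) ut).
Qed.

Lemma sigma_P1 : sigma P1 = 1%g.
Proof. by apply/permP => v; rewrite sigmaE perm1 Mof_P1 vx_act1. Qed.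

Lemma sigma_eq1 w : sigma w = 1%g -> w = P1.
Proof.
move=> w1; have Mw_root := is_root_Mof w.
have fix_pairs i j : i != j -> exists b, Mof w *m (e i + e j) = sgn b *: (e i + e j).
  move=> neq_ij; have ij_root : e i + e j \in psi_seq by rewrite mem_psi_seq is_root_pair.
  have := congr1 (fun s : {perm V} => s (vtx (SeqSub ij_root))) w1.
  rewrite /= perm1 sigmaE vx_act_vtx // => /eqP.
  rewrite vtx_eq val_root_act //=.
  case/orP => /eqP fix_ij; first by exists false; rewrite scale1r -fix_ij.
  by exists true; rewrite scaleN1r {2}fix_ij opprK.
apply: (@Mof_scalar w (sgn (Mof_sign w 0))); last by rewrite signr_eq0.
rewrite Mof_signed_perm_mx; apply: signed_perm_mx_fixing_pairs_scalar.
by rewrite -Mof_signed_perm_mx.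
Qed.

Lemma sigma_inj : injective sigma.
Proof.
move=> t u tu; apply: Pmul1_eq; apply: sigma_eq1.
by rewrite -sigmaM tu sigmaM Pmulxx sigma_P1.
Qed.

Lemma group_set_sigma : group_set [set sigma t | t : P].
Proof.
apply/group_setP; split; first by rewrite -sigma_P1 imset_f.
by move=> _ _ /imsetP [t _ ->] /imsetP [u _ ->]; rewrite sigmaM imset_f.
Qed.

Canonical sigma_group := Group group_set_sigma.

Lemma abelem_sigma_group : (2.-abelem sigma_group)%g.
Proof.
apply/abelemP => //; split.
  apply/centsP => _ /imsetP [t _ ->] _ /imsetP [u _ ->].
  by rewrite /commute !sigmaM PmulC.
by move=> _ /imsetP [t _ ->]; rewrite expgS expg1 sigmaM Pmulxx sigma_P1.
Qed.

Lemma sigma_group_sub_Aut : sigma_group \subset Aut_G.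
Proof. by apply/subsetP => _ /imsetP [t _ ->]; exact: sigma_aut. Qed.

Lemma sigma_group_isog : sigma_group \isog [set: 'rV['Z_2]_6].
Proof.
rewrite (isog_abelem_card _ abelem_sigma_group) cardsT card_mx card_ord.
rewrite /= card_imset; last exact: sigma_inj.
by rewrite !card_prod !card_ord eqxx andbT; exact: (@mx_Fp_abelem 2 1 6 isT).
Qed.

Theorem lemma3p2 :
  exists sigma : P -> {perm V},
    (forall (t : P) (x : Root),
        exists y : Root, val y = Mof t *m val x /\ sigma t (vtx x) = vtx y)
    /\ (forall t : P, sigma t \in Aut_G)
    /\ exists L : {group {perm V}},
         [/\ L :=: [set sigma t | t : P], L \subset Aut_G
           & L \isog [set: 'rV['Z_2]_6]].
Proof.
exists sigma; split.
  move=> t x; have Mt_root := is_root_Mof t.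
  by exists (root_act (Mof t) x); rewrite val_root_act // sigmaE vx_act_vtx.
split; first exact: sigma_aut.
by exists sigma_group; split; [| exact: sigma_group_sub_Aut | exact: sigma_group_isog].
Qed.
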